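(* Let $T$, $\mathcal{S}=\mathcal{S}_+\cup\mathcal{S}_-$, $\Psi$, $\lambda,\mu$, $P_\lambda,P_\mu$ and $E,F,G,H$ be as in the context, and let $R_1:=E(I-\Psi H)^{-1}$. Let $$C'_{-1}=\frac12\begin{bmatrix}0&P_{\mu+-}\\0&P_{\mu--}\end{bmatrix},\quad C'_0=\frac12\begin{bmatrix}P_{\mu++}&P_{\lambda+-}\\P_{\mu-+}&P_{\lambda--}\end{bmatrix},\quad C'_1=\frac12\begin{bmatrix}P_{\lambda++}&0\\P_{\lambda-+}&0\end{bmatrix},$$ and let $\mathcal{R}_{C'}$ be the minimal nonnegative solution of $\mathcal{R}^2C'_{-1}+\mathcal{R}C'_0+C'_1=\mathcal{R}$ (the expected-number-of-visits matrix of the QBD with these transition blocks). Then $$\mathcal{R}_{C'}=(I-C'_0)\begin{bmatrix}E&0\\H&0\end{bmatrix}\begin{bmatrix}I&R_1\Psi\\0&(I-H\Psi)^{-1}\end{bmatrix}(I-C'_0)^{-1},$$ and the spectral radius of $\mathcal{R}_{C'}$ equals $\rho(R_1)$.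
   Context: $T$ is the generator of a continuous-time Markov chain on a finite set $\mathcal{S}=\mathcal{S}_+\cup\mathcal{S}_-$ (disjoint, both nonempty), partitioned into blocks $T_{++},T_{+-},T_{-+},T_{--}$ according to $\mathcal{S}_\pm$. $\Psi$ is the minimal nonnegative solution of $T_{+-}+\Psi T_{--}+T_{++}\Psi+\Psi T_{-+}\Psi=0$ (the first-return probability matrix of the unit-rate fluid queue with phase generator $T$, rates $+1$ on $\mathcal{S}_+$ and $-1$ on $\mathcal{S}_-$). $\lambda,\mu>0$ satisfy $\lambda,\mu\ge\max_i|T_{ii}|$; $P_\lambda:=I+\lambda^{-1}T$, $P_\mu:=I+\mu^{-1}T$ with blocks $P_{\lambda++}$ etc. The matrices $E,G,H,F$ are defined by $\begin{bmatrix}E&G\\H&F\end{bmatrix}=\begin{bmatrix}I-\mu^{-1}T_{++}&-\lambda^{-1}T_{+-}\\-\mu^{-1}T_{-+}&I-\lambda^{-1}T_{--}\end{bmatrix}^{-1}\begin{bmatrix}I+\lambda^{-1}T_{++}&\mu^{-1}T_{+-}\\\lambda^{-1}T_{-+}&I+\mu^{-1}T_{--}\end{bmatrix}$, with $E$ of size $|\mathcal{S}_+|\times|\mathcal{S}_+|$ and $F$ of size $|\mathcal{S}_-|\times|\mathcal{S}_-|$. $\rho(\cdot)$ denotes spectral radius. *)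

From HB Require Import structures.
From mathcomp Require Import all_boot all_order all_algebra.
From mathcomp Require Import complex.
From mathcomp Require Import classical_sets reals.
Set Implicit Arguments. Unset Strict Implicit. Unset Printing Implicit Defensive.
Import Order.TTheory GRing.Theory Num.Theory.
Local Open Scope ring_scope.

Definition mx_nonneg (R : realType) m n (A : 'M[R]_(m, n)) : Prop :=
  forall i j, 0 <= A i j.
Definition mx_le (R : realType) m n (A B : 'M[R]_(m, n)) : Prop :=
  forall i j, A i j <= B i j.

Definition is_min_nonneg_sol (R : realType) m n
    (eqn : 'M[R]_(m, n) -> 'M[R]_(m, n)) (X : 'M[R]_(m, n)) : Prop :=
  [/\ mx_nonneg X, eqn X = 0 &
      forall Y, mx_nonneg Y -> eqn Y = 0 -> mx_le X Y].

Definition is_generator (R : realType) n (T : 'M[R]_n) : Prop :=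
  (forall i j, i != j -> 0 <= T i j) /\ (forall i, \sum_j T i j = 0).

Definition spectral_radius (R : realType) n (A : 'M[R]_n) : R :=
  sup [set r : R | exists z : R[i],
         eigenvalue (map_mx (fun x : R => x%:C%C) A) z /\ r = Normc.normc z].

Definition Pmx (R : realType) n (a : R) (T : 'M[R]_n) : 'M[R]_n :=
  1%:M + a^-1 *: T.

(* the matrix [E G; H F] of the context, for T partitioned as (p + m) *)
Definition EGHF (R : realType) p m (lam mu : R) (T : 'M[R]_(p + m))
    : 'M[R]_(p + m) :=
  let Tpp := ulsubmx T in let Tpm := ursubmx T in
  let Tmp := dlsubmx T in let Tmm := drsubmx T in
  invmx (block_mx (1%:M - mu^-1 *: Tpp) (- (lam^-1 *: Tpm))
                  (- (mu^-1 *: Tmp)) (1%:M - lam^-1 *: Tmm))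
  *m block_mx (1%:M + lam^-1 *: Tpp) (mu^-1 *: Tpm)
              (lam^-1 *: Tmp) (1%:M + mu^-1 *: Tmm).

From HB Require Import structures.
From mathcomp Require Import all_boot all_order all_algebra.
From mathcomp Require Import complex.
From mathcomp Require Import classical_sets reals.
From mathcomp Require Import boolp topology normedtype sequences.
From mathcomp Require Import ring lra.
Import Order.TTheory GRing.Theory Num.Theory.
Local Open Scope ring_scope.
Set Implicit Arguments. Unset Strict Implicit. Unset Printing Implicit Defensive.

(* Put A := I - C'_0.  It is a nonsingular M-matrix, and [E G; H F] = A^-1 [C D]
   where C'_1 = [C 0] and C'_{-1} = [0 D]; split A^-1 = [alpha; beta] by rows.
   Multiplied by A^-1, the QBD equation becomes X = C alpha + X^2 D beta, so its
   minimal nonnegative solution is C Gamma for the least nonnegative fixed point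
   Gamma of Gamma |-> alpha + Gamma C Gamma D beta.  The matrix
   alpha + R1 Psi beta is a fixed point, because its products with C and D are R1
   and Psi; it is the least one, because the D-block of a smaller fixed point
   solves the Riccati equation and hence is Psi.  Therefore
   R_C' = A [E; H] [I, R1 Psi] A^-1, which has the nonzero spectrum of
   [I, R1 Psi] [E; H] = E + R1 Psi H = R1.  Throughout, I - Psi H is invertible
   because Psi H 1 < 1 entrywise. *)

(* Matrix identities are reduced to commutative ring identities by expanding
   and then abstracting every remaining matrix product. *)
Ltac mx_entrywise :=
  do 3 (rewrite ?mulmxDr ?mulmxDl ?mulmxBr ?mulmxBl ?mulmx1 ?mul1mx
          -?scalemxAr -?scalemxAl ?mulmxA ?mulNmx ?mulmxN
          ?scalerDr ?scalerBr ?scaleNr ?scalerN ?scalerA);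
  repeat match goal with |- context [?a *m ?b] =>
    let z := fresh "z" in set z := a *m b; clearbody z end;
  apply/matrixP => i j; rewrite !mxE.

Section EntrywiseOrder.
Variable R : realType.
Implicit Types a b c : nat.

Lemma mx_nonneg0 a b : mx_nonneg (0 : 'M[R]_(a, b)).
Proof. by move=> i j; rewrite mxE. Qed.

Lemma mx_nonnegD a b (A B : 'M[R]_(a, b)) :
  mx_nonneg A -> mx_nonneg B -> mx_nonneg (A + B).
Proof. by move=> hA hB i j; rewrite mxE addr_ge0. Qed.

Lemma mx_nonnegM a b c (A : 'M[R]_(a, b)) (B : 'M[R]_(b, c)) :
  mx_nonneg A -> mx_nonneg B -> mx_nonneg (A *m B).
Proof. by move=> hA hB i j; rewrite mxE sumr_ge0 // => k _; rewrite mulr_ge0. Qed.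

Lemma mx_nonnegZ a b (x : R) (A : 'M[R]_(a, b)) :
  0 <= x -> mx_nonneg A -> mx_nonneg (x *: A).
Proof. by move=> hx hA i j; rewrite mxE mulr_ge0. Qed.

Lemma mx_nonneg_ge0 a b (A : 'M[R]_(a, b)) : mx_nonneg A <-> mx_le 0 A.
Proof. by split=> h i j; move: (h i j); rewrite mxE. Qed.

Lemma mx_nonneg_le a b (A B : 'M[R]_(a, b)) :
  mx_nonneg A -> mx_le A B -> mx_nonneg B.
Proof. by move=> hA h i j; apply: le_trans (hA i j) (h i j). Qed.

Lemma mx_nonneg_ulsub a1 a2 b1 b2 (A : 'M[R]_(a1 + a2, b1 + b2)) :
  mx_nonneg A -> mx_nonneg (ulsubmx A).
Proof. by move=> h i j; rewrite !mxE. Qed.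

Lemma mx_nonneg_ursub a1 a2 b1 b2 (A : 'M[R]_(a1 + a2, b1 + b2)) :
  mx_nonneg A -> mx_nonneg (ursubmx A).
Proof. by move=> h i j; rewrite !mxE. Qed.

Lemma mx_nonneg_dlsub a1 a2 b1 b2 (A : 'M[R]_(a1 + a2, b1 + b2)) :
  mx_nonneg A -> mx_nonneg (dlsubmx A).
Proof. by move=> h i j; rewrite !mxE. Qed.

Lemma mx_nonneg_drsub a1 a2 b1 b2 (A : 'M[R]_(a1 + a2, b1 + b2)) :
  mx_nonneg A -> mx_nonneg (drsubmx A).
Proof. by move=> h i j; rewrite !mxE. Qed.

Lemma mx_nonneg_usub a1 a2 b (A : 'M[R]_(a1 + a2, b)) :
  mx_nonneg A -> mx_nonneg (usubmx A).
Proof. by move=> h i j; rewrite !mxE. Qed.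

Lemma mx_nonneg_dsub a1 a2 b (A : 'M[R]_(a1 + a2, b)) :
  mx_nonneg A -> mx_nonneg (dsubmx A).
Proof. by move=> h i j; rewrite !mxE. Qed.

Lemma mx_nonneg_col a1 a2 b (A : 'M[R]_(a1, b)) (B : 'M[R]_(a2, b)) :
  mx_nonneg A -> mx_nonneg B -> mx_nonneg (col_mx A B).
Proof. by move=> hA hB i j; rewrite mxE; case: splitP. Qed.

Lemma mx_le_refl a b (A : 'M[R]_(a, b)) : mx_le A A.
Proof. by []. Qed.

Lemma mx_le_trans a b (A B C : 'M[R]_(a, b)) :
  mx_le A B -> mx_le B C -> mx_le A C.
Proof. by move=> h1 h2 i j; apply: le_trans (h1 i j) (h2 i j). Qed.

Lemma mx_le_anti a b (A B : 'M[R]_(a, b)) : mx_le A B -> mx_le B A -> A = B.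
Proof. by move=> h1 h2; apply/matrixP => i j; apply/eqP; rewrite eq_le h1 h2. Qed.

Lemma mx_leD a b (A A' B B' : 'M[R]_(a, b)) :
  mx_le A A' -> mx_le B B' -> mx_le (A + B) (A' + B').
Proof. by move=> h1 h2 i j; rewrite !mxE lerD. Qed.

Lemma mx_leZ a b (x : R) (A B : 'M[R]_(a, b)) :
  0 <= x -> mx_le A B -> mx_le (x *: A) (x *: B).
Proof. by move=> hx h i j; rewrite !mxE ler_wpM2l. Qed.

Lemma mx_le_mul2l a b c (C : 'M[R]_(a, b)) (A B : 'M[R]_(b, c)) :
  mx_nonneg C -> mx_le A B -> mx_le (C *m A) (C *m B).
Proof. by move=> hC h i j; rewrite !mxE; apply: ler_sum => k _; rewrite ler_wpM2l. Qed.

Lemma mx_le_mul2r a b c (C : 'M[R]_(b, c)) (A B : 'M[R]_(a, b)) :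
  mx_nonneg C -> mx_le A B -> mx_le (A *m C) (B *m C).
Proof. by move=> hC h i j; rewrite !mxE; apply: ler_sum => k _; rewrite ler_wpM2r. Qed.

Lemma mx_le_mul a b c (A A' : 'M[R]_(a, b)) (B B' : 'M[R]_(b, c)) :
  mx_nonneg A -> mx_nonneg B' -> mx_le A A' -> mx_le B B' ->
  mx_le (A *m B) (A' *m B').
Proof.
by move=> hA hB' h1 h2; apply: mx_le_trans (mx_le_mul2l hA h2) (mx_le_mul2r hB' h1).
Qed.

End EntrywiseOrder.

Lemma sumr_gt0_witness (R : realType) k (f : 'I_k -> R) :
  (forall i, 0 <= f i) -> 0 < \sum_i f i -> exists i, 0 < f i.
Proof.
move=> f_ge0 /lt0r_neq0; rewrite psumr_neq0 // => /hasP [i _ /= hi].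
by exists i.
Qed.

Section ZMatrix.
Variables (R : realType) (k : nat) (A : 'M[R]_k) (v : 'cV[R]_k).
Hypothesis A_offdiag : forall i j, i != j -> A i j <= 0.
Hypothesis v_gt0 : forall i, 0 < v i 0.
Hypothesis Av_gt0 : forall i, 0 < (A *m v) i 0.

(* Compare x with the multiple t v of v, t := min_i x_i / v_i: if t < 0, the
   row of A at a minimizing index sends x to something negative. *)
Lemma Zmx_nonneg_preimage (x : 'cV[R]_k) : mx_nonneg (A *m x) -> mx_nonneg x.
Proof.
move=> hx i0 j0; rewrite (ord1 j0); case: (leP 0 (x i0 0)) => // x_lt0; exfalso.
pose F i := x i 0 / v i 0.
have [i _ imin] := @arg_minP _ R _ i0 xpredT F isT.
set t := F i in imin.
have t_lt0 : t < 0.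
  by apply: le_lt_trans (imin i0 isT) _; rewrite /F pmulr_llt0 ?invr_gt0.
have x_ge j : t * v j 0 <= x j 0 by have := imin j isT; rewrite /F ler_pdivlMr.
have x_i : x i 0 = t * v i 0 by rewrite /t /F mulrVK // unitfE gt_eqF.
have : (A *m x) i 0 <= t * (A *m v) i 0.
  rewrite !mxE mulr_sumr; apply: ler_sum => j _.
  have [->|ne] := eqVneq j i; first by rewrite x_i mulrCA.
  by rewrite mulrCA; apply: ler_wnM2l; [apply: A_offdiag; rewrite eq_sym | exact: x_ge].
by rewrite leNgt => /negP; apply; apply: lt_le_trans (hx i 0); rewrite nmulr_rlt0.
Qed.

Lemma Zmx_unit_inv_nonneg : A \in unitmx /\ mx_nonneg (invmx A).
Proof.
have A_unit : A \in unitmx.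
  rewrite -unitmx_tr -row_free_unit; apply: inj_row_free => w hw.
  have Aw0 : A *m w^T = 0 by rewrite -[A]trmxK -trmx_mul hw trmx0.
  have w_ge0 : mx_nonneg w^T.
    by apply: Zmx_nonneg_preimage; rewrite Aw0; apply: mx_nonneg0.
  have w_le0 : mx_nonneg (- w^T).
    by apply: Zmx_nonneg_preimage; rewrite mulmxN Aw0 oppr0; apply: mx_nonneg0.
  apply/matrixP => i j; apply/eqP; rewrite mxE eq_le.
  by have := w_ge0 j i; have := w_le0 j i; rewrite !mxE oppr_ge0 => -> ->.
split=> // i j.
suff /Zmx_nonneg_preimage/(_ i 0) : mx_nonneg (A *m col j (invmx A)) by rewrite mxE.
rewrite colE mulmxA mulmxV // mul1mx => a b; rewrite mxE.
by case: (_ == _); rewrite ?mulr0n ?mulr1n.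
Qed.

End ZMatrix.

Section EntrywiseLimits.
Variable R : realType.
Local Open Scope classical_set_scope.
Import numFieldNormedType.Exports.
Implicit Types a b c : nat.

Definition mx_cvg a b (X : nat -> 'M[R]_(a, b)) (L : 'M[R]_(a, b)) :=
  forall i j, (fun k => X k i j) @ \oo --> L i j.

Lemma mx_cvg_cst a b (L : 'M[R]_(a, b)) : mx_cvg (fun _ => L) L.
Proof. by move=> i j; apply: cvg_cst. Qed.

Lemma mx_cvgD a b (X Y : nat -> 'M[R]_(a, b)) L M :
  mx_cvg X L -> mx_cvg Y M -> mx_cvg (fun k => X k + Y k) (L + M).
Proof.
move=> hX hY i j; rewrite mxE.
have -> : (fun k => (X k + Y k) i j) = (fun k => X k i j) \+ (fun k => Y k i j).
  by apply/funext => k; rewrite !mxE.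
exact: cvgD.
Qed.

Lemma mx_cvgZ a b (x : R) (X : nat -> 'M[R]_(a, b)) L :
  mx_cvg X L -> mx_cvg (fun k => x *: X k) (x *: L).
Proof.
move=> hX i j; rewrite mxE.
have -> : (fun k => (x *: X k) i j) = (fun _ => x) \* (fun k => X k i j).
  by apply/funext => k; rewrite !mxE.
by apply: cvgM => //; apply: cvg_cst.
Qed.

Lemma mx_cvgM a b c (X : nat -> 'M[R]_(a, b)) (Y : nat -> 'M[R]_(b, c)) L M :
  mx_cvg X L -> mx_cvg Y M -> mx_cvg (fun k => X k *m Y k) (L *m M).
Proof.
move=> hX hY i j; rewrite mxE.
have -> : (fun k => (X k *m Y k) i j) = (fun k => \sum_(l < b) X k i l * Y k l j).
  by apply/funext => k; rewrite !mxE.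
apply: (@cvg_big R^o _ +%R 0 xpredT add_continuous _ _ _
  (fun l k => X k i l * Y k l j)) => // l _.
exact: cvgM.
Qed.

Lemma mx_cvgMl a b c (C : 'M[R]_(a, b)) (X : nat -> 'M[R]_(b, c)) L :
  mx_cvg X L -> mx_cvg (fun k => C *m X k) (C *m L).
Proof. by apply: mx_cvgM; apply: mx_cvg_cst. Qed.

Lemma mx_cvgMr a b c (C : 'M[R]_(b, c)) (X : nat -> 'M[R]_(a, b)) L :
  mx_cvg X L -> mx_cvg (fun k => X k *m C) (L *m C).
Proof. by move/mx_cvgM; apply; apply: mx_cvg_cst. Qed.

Lemma mx_cvg_unique a b (X : nat -> 'M[R]_(a, b)) L M :
  mx_cvg X L -> mx_cvg X M -> L = M.
Proof. by move=> h1 h2; apply/matrixP => i j; apply: cvg_unique (h1 i j) (h2 i j). Qed.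

Lemma mx_cvg_shiftS a b (X : nat -> 'M[R]_(a, b)) L :
  mx_cvg X L -> mx_cvg (fun k => X k.+1) L.
Proof. by move=> h i j; have := h i j; rewrite -cvg_shiftS. Qed.

Lemma mx_cvg_le a b (X : nat -> 'M[R]_(a, b)) L B :
  mx_cvg X L -> (forall k, mx_le (X k) B) -> mx_le L B.
Proof.
move=> hX hB i j; apply: (ler_cvg_to (hX i j) (cvg_cst (B i j))).
by near=> k; apply: hB.
Unshelve. all: by end_near.
Qed.

Lemma mx_cvg_ge a b (X : nat -> 'M[R]_(a, b)) L B :
  mx_cvg X L -> (forall k, mx_le B (X k)) -> mx_le B L.
Proof.
move=> hX hB i j; apply: (ler_cvg_to (cvg_cst (B i j)) (hX i j)).
by near=> k; apply: hB.
Unshelve. all: by end_near.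
Qed.

Lemma mx_cvg_entry a b (X : nat -> 'M[R]_(a, b)) L i j x :
  mx_cvg X L -> (forall k, X k i j = x) -> L i j = x.
Proof.
move=> hX hx; have := hX i j.
have -> : (fun k => X k i j) = (fun _ => x) by apply/funext.
by move=> hx'; apply: cvg_unique hx' (cvg_cst x).
Qed.

Lemma mx_cvg_nondecreasing a b (X : nat -> 'M[R]_(a, b)) B :
  (forall k, mx_le (X k) (X k.+1)) -> (forall k, mx_le (X k) B) ->
  exists L, mx_cvg X L.
Proof.
move=> X_incr X_ub; exists (\matrix_(i, j) sup (range (fun k => X k i j))) => i j.
rewrite mxE; apply: nondecreasing_cvgn.
  by apply/nondecreasing_seqP => k; apply: X_incr.
by exists (B i j) => _ [k _ <-]; apply: X_ub.
Qed.

Lemma iter_cvg_fixpoint a b (f : 'M[R]_(a, b) -> 'M[R]_(a, b)) B :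
  (forall X Y, mx_nonneg X -> mx_le X Y -> mx_le (f X) (f Y)) ->
  (forall X, mx_nonneg X -> mx_nonneg (f X)) ->
  (forall X L, mx_cvg X L -> mx_cvg (fun k => f (X k)) (f L)) ->
  mx_nonneg B -> f B = B ->
  exists L, [/\ mx_cvg (fun k => iter k f 0) L, mx_nonneg L, mx_le L B & f L = L].
Proof.
move=> f_mono f_nonneg f_cont B_ge0 fB.
have iter_ge0 k : mx_nonneg (iter k f 0).
  by elim: k => [|k IH] /=; [apply: mx_nonneg0 | apply: f_nonneg].
have iter_incr k : mx_le (iter k f 0) (iter k.+1 f 0).
  elim: k => [|k IH] /=; last by apply: f_mono.
  by apply/mx_nonneg_ge0/f_nonneg/mx_nonneg0.
have iter_le k : mx_le (iter k f 0) B.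
  elim: k => [|k IH] /=; first by apply/mx_nonneg_ge0.
  by rewrite -fB; apply: f_mono.
have [L hL] := mx_cvg_nondecreasing iter_incr iter_le.
exists L; split => //.
- by apply/mx_nonneg_ge0; apply: mx_cvg_ge hL _ => k; apply/mx_nonneg_ge0.
- exact: mx_cvg_le hL iter_le.
- exact: mx_cvg_unique (f_cont _ _ hL) (mx_cvg_shiftS hL).
Qed.

End EntrywiseLimits.

Section SpectralRadius.
Local Open Scope classical_set_scope.
Variable R : realType.
Local Notation C := (R[i]).

Lemma eigenvalue_similar n (P K : 'M[C]_n) z : P \in unitmx ->
  eigenvalue (P *m K *m invmx P) z = eigenvalue K z.
Proof.
move=> uP; apply/eigenvalueP/eigenvalueP => [[v hv nv]|[w hw nw]].
  exists (v *m P).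
    transitivity (v *m (P *m K *m invmx P) *m P); first by rewrite !mulmxA mulmxKV.
    by rewrite hv -scalemxAl.
  by apply: contra nv => /eqP h; rewrite -(mulmxK uP v) h mul0mx.
exists (w *m invmx P); first by rewrite !mulmxA mulmxKV // hw scalemxAl.
by apply: contra nw => /eqP h; rewrite -(mulmxKV uP w) h mul0mx.
Qed.

Lemma eigenvalue_mulC n k (X : 'M[C]_(n, k)) (Y : 'M[C]_(k, n)) z : z != 0 ->
  eigenvalue (X *m Y) z -> eigenvalue (Y *m X) z.
Proof.
move=> nz /eigenvalueP [v hv nv]; apply/eigenvalueP; exists (v *m X).
  by rewrite mulmxA -(mulmxA v) hv -scalemxAl.
apply: contra nv => /eqP h.
have : z *: v = 0 by rewrite -hv mulmxA h mul0mx.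
by move/eqP; rewrite scaler_eq0 (negPf nz).
Qed.

Lemma eigenvalue0_mul n k (X : 'M[C]_(n, k)) (Y : 'M[C]_(k, n)) :
  (k < n)%N -> eigenvalue (X *m Y) 0.
Proof.
move=> kn; have : kermx X != 0.
  rewrite kermx_eq0 /row_free; apply/negP => /eqP h.
  by have := rank_leq_col X; rewrite h leqNgt kn.
case/matrix0Pn => i [j nij]; apply/eigenvalueP; exists (row i (kermx X)).
  by rewrite mulmxA -row_mul mulmx_ker row0 mul0mx scale0r.
by apply/matrix0Pn; exists 0, j; rewrite mxE.
Qed.

Lemma normc0 : Normc.normc (0 : C) = 0.
Proof. by rewrite /= expr0n /= addr0 sqrtr0. Qed.

Lemma sup_setU0 (S : set R) : (forall r, S r -> 0 <= r) -> sup (S `|` [set 0]) = sup S.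
Proof.
move=> S_ge0; have [->|/eqP/set0P [x Sx]] := pselect (S = set0).
  by rewrite set0U sup1 sup0.
have [S_sup|S_nosup] := pselect (has_sup S).
  by rewrite setUC sup_setU // => a b -> /S_ge0.
rewrite !sup_out // => -[_ [u hu]]; apply: S_nosup; split; first by exists x.
by exists u => y Sy; apply: hu; left.
Qed.

(* The products X Y and Y X share their nonzero eigenvalues, and 0 is an
   eigenvalue of the larger one. *)
Lemma spectral_radius_similar_mulC n k (P : 'M[R]_n) (X : 'M[R]_(n, k)) (Y : 'M[R]_(k, n)) :
  P \in unitmx -> (k < n)%N ->
  spectral_radius (P *m (X *m Y) *m invmx P) = spectral_radius (Y *m X).
Proof.
move=> P_unit kn; rewrite /spectral_radius.
have -> a b (A : 'M[R]_(a, b)) : map_mx (fun x : R => x%:C%C) A = map_mx (real_complex R) A.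
  by [].
rewrite !map_mxM map_invmx.
have P'_unit : map_mx (real_complex R) P \in unitmx by rewrite map_unitmx.
rewrite -[in RHS]sup_setU0; last first.
  by move=> r [z [_ ->]]; rewrite /Normc.normc; case: z => a b; apply: sqrtr_ge0.
congr sup; apply/seteqP; split => r.
  case=> z [+ ->]; rewrite eigenvalue_similar // => hz.
  have [->|nz] := eqVneq z 0; first by right; apply: normc0.
  by left; exists z; split => //; apply: eigenvalue_mulC.
case=> [[z [hz ->]]|->].
  exists z; split => //; rewrite eigenvalue_similar //.
  have [->|nz] := eqVneq z 0; [exact: eigenvalue0_mul | exact: eigenvalue_mulC].
by exists 0; split; [rewrite eigenvalue_similar //; apply: eigenvalue0_mul | rewrite normc0].
Qed.

End SpectralRadius.

Lemma col_mx_const (T : Type) a b c (x : T) :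
  const_mx x = col_mx (const_mx x : 'M_(a, c)) (const_mx x : 'M_(b, c)).
Proof.
by apply/matrixP => i j; rewrite mxE; case: (split_ordP i) => i' ->;
  rewrite ?col_mxEu ?col_mxEd mxE.
Qed.

Lemma mulmx_const1E (R : realType) a b (X : 'M[R]_(a, b)) i j :
  (X *m (const_mx 1 : 'cV[R]_b)) i j = \sum_k X i k.
Proof. by rewrite mxE; apply: eq_bigr => k _; rewrite mxE mulr1. Qed.

Lemma mulmx_const1_block (R : realType) a1 a2 b1 b2 (A : 'M[R]_(a1 + a2, b1 + b2)) :
  A *m (const_mx 1 : 'cV[R]_(b1 + b2)) =
  col_mx (ulsubmx A *m const_mx 1 + ursubmx A *m (const_mx 1 : 'cV_b2))
         (dlsubmx A *m (const_mx 1 : 'cV_b1) + drsubmx A *m const_mx 1).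
Proof. by rewrite -{1}[A]submxK (col_mx_const b1 b2 1 (1 : R)) mul_block_col. Qed.

Lemma mulmx_block_col0 (R : realType) a1 a2 b d c1 c2
    (A : 'M[R]_(a1, b)) (B : 'M[R]_(a2, b)) (X : 'M[R]_(b, c1)) (Y : 'M[R]_(b, c2))
    (Z : 'M[R]_(d, c2)) :
  block_mx A 0 B 0 *m block_mx X Y 0 Z = col_mx A B *m row_mx X Y.
Proof. by rewrite mulmx_block mul_col_row !mulmx0 !mul0mx !addr0. Qed.

Definition riccati (R : realType) p m (Tpp : 'M[R]_p) (Tpm : 'M[R]_(p, m))
    (Tmp : 'M[R]_(m, p)) (Tmm : 'M[R]_m) (Y : 'M[R]_(p, m)) :=
  Tpm + Y *m Tmm + Tpp *m Y + Y *m Tmp *m Y.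

(* The blocks G, H, F of [E G; H F] enter only through the identities below
   (two blocks of EGHF_den *m EGHF = EGHF_num, and the unit row sums), which
   also keeps them opaque to [mxE]. *)
Section RowSupport.
Variables (R : realType) (p m : nat) (lam mu : R).
Variables (Tpp : 'M[R]_p) (Tpm : 'M[R]_(p, m)) (Tmp : 'M[R]_(m, p)) (Tmm : 'M[R]_m).
Variables (G Psi : 'M[R]_(p, m)) (H : 'M[R]_(m, p)) (F : 'M[R]_m).
Hypotheses (lam_gt0 : 0 < lam) (mu_gt0 : 0 < mu).
Local Notation one k := (const_mx 1 : 'cV[R]_k).
Hypotheses (Tpp_offdiag : forall k l, k != l -> 0 <= Tpp k l)
           (Tmm_offdiag : forall k l, k != l -> 0 <= Tmm k l)
           (Tpm_nonneg : mx_nonneg Tpm) (Tmp_nonneg : mx_nonneg Tmp).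
Hypotheses (Tp_rowsum : Tpp *m one p + Tpm *m one m = 0)
           (Tm_rowsum : Tmp *m one p + Tmm *m one m = 0)
           (Pm_dr_nonneg : mx_nonneg (1%:M + mu^-1 *: Tmm)).
Hypotheses (G_nonneg : mx_nonneg G) (H_nonneg : mx_nonneg H) (F_nonneg : mx_nonneg F)
           (Psi_nonneg : mx_nonneg Psi).
Hypothesis eq_ur : G - mu^-1 *: (Tpp *m G) - lam^-1 *: (Tpm *m F) = mu^-1 *: Tpm.
Hypothesis eq_dr :
  - (mu^-1 *: (Tmp *m G)) + F - lam^-1 *: (Tmm *m F) = 1%:M + mu^-1 *: Tmm.
Hypothesis H1_F1 : H *m one p + F *m one m = one m.
Hypothesis Psi_mul1_le : mx_le (Psi *m one m) (one p).
Hypothesis riccati_Psi : riccati Tpp Tpm Tmp Tmm Psi = 0.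

Lemma G_row0_closed k : (forall j, G k j = 0) ->
  (forall j, Tpm k j = 0) /\ (forall l, Tpp k l != 0 -> forall j, G l j = 0).
Proof.
move=> Gk0.
have TG_ge0 j l : 0 <= Tpp k l * G l j.
  have [<-|ne] := eqVneq k l; first by rewrite Gk0 mulr0.
  by rewrite mulr_ge0 ?Tpp_offdiag.
have row_eq j : Tpm k j = 0 /\ forall l, Tpp k l * G l j = 0.
  have := congr1 (fun X : 'M[R]_(p, m) => X k j) eq_ur; rewrite /= !mxE Gk0.
  set s1 := \sum_l _; set s2 := \sum_l _ => e.
  have mu_inv_ge0 : 0 <= mu^-1 by rewrite invr_ge0 ltW.
  have s1_ge0 : 0 <= mu^-1 * s1 by rewrite mulr_ge0 ?sumr_ge0.
  have s2_ge0 : 0 <= lam^-1 * s2.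
    by rewrite mulr_ge0 ?invr_ge0 ?(ltW lam_gt0) ?sumr_ge0 // => l _; rewrite mulr_ge0.
  have Tpm_ge0 : 0 <= mu^-1 * Tpm k j by rewrite mulr_ge0.
  have /eqP : mu^-1 * s1 = 0 by lra.
  have /eqP : mu^-1 * Tpm k j = 0 by lra.
  rewrite !mulf_eq0 invr_eq0 (gt_eqF mu_gt0) /= => /eqP Tpm0 /eqP s1_0.
  by split=> // l; apply: (psumr_eq0P (fun l _ => TG_ge0 j l) s1_0).
split=> [j|l Tkl j]; first by case: (row_eq j).
by have /eqP := (row_eq j).2 l; rewrite mulf_eq0 (negPf Tkl) => /eqP.
Qed.

(* The rows where G vanishes are invariant under every map Y |-> Y + c Ric(Y). *)
Lemma Psi_row0 (c : R) :
  mx_cvg (fun n => iter n (fun Y => Y + c *: riccati Tpp Tpm Tmp Tmm Y) 0) Psi ->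
  forall l, (forall j, G l j = 0) -> forall j, Psi l j = 0.
Proof.
move=> Psi_lim; pose step Y := Y + c *: riccati Tpp Tpm Tmp Tmm Y.
pose rows0 (Y : 'M[R]_(p, m)) := forall k, (forall j, G k j = 0) -> forall j, Y k j = 0.
suff iter_rows0 n : rows0 (iter n step 0).
  by move=> l Gl0 j; apply: (mx_cvg_entry Psi_lim) => n; apply: iter_rows0.
elim: n => [|n IH] k Gk0 j /=; first by rewrite mxE.
set Y := iter n _ 0 in IH *; have [Tpm0 Tpp_row] := G_row0_closed Gk0.
have Y_row0 q (Z : 'M[R]_(m, q)) i : (Y *m Z) k i = 0.
  by rewrite mxE big1 // => l _; rewrite IH // mul0r.
have TppY : (Tpp *m Y) k j = 0.
  rewrite mxE big1 // => l _; have [->|Tkl] := eqVneq (Tpp k l) 0; first by rewrite mul0r.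
  by rewrite IH ?mulr0 // => i; apply: Tpp_row.
rewrite /step [(Y + _) k j]mxE [(c *: riccati _ _ _ _ _) k j]mxE /riccati -mulmxA.
rewrite [(_ + Y *m _) k j]mxE [(_ + Tpp *m Y) k j]mxE [(Tpm + _) k j]mxE.
by rewrite IH // Tpm0 !Y_row0 TppY !(addr0, add0r, mulr0).
Qed.

Lemma H_rowsum_le1 j : \sum_l H j l <= 1.
Proof.
have := congr1 (fun X : 'cV[R]_m => X j 0) H1_F1.
rewrite /= [(_ + F *m _) j 0]mxE [one m j 0]mxE !mulmx_const1E => e.
have : 0 <= \sum_l F j l by apply: sumr_ge0 => l _; apply: F_nonneg.
lra.
Qed.

Lemma Psi_row_saturated i : 1 <= \sum_j Psi i j * \sum_l H j l ->
  \sum_j Psi i j = 1 /\ forall j, 0 < Psi i j -> \sum_l H j l = 1.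
Proof.
move=> PsiH_ge1.
have H_ge0 j : 0 <= \sum_l H j l by apply: sumr_ge0 => l _; apply: H_nonneg.
have Psi_row_le1 : \sum_j Psi i j <= 1.
  by have := Psi_mul1_le i 0; rewrite mulmx_const1E mxE.
have PsiH_le : \sum_j Psi i j * \sum_l H j l <= \sum_j Psi i j.
  by apply: ler_sum => j _; rewrite ler_piMr ?H_rowsum_le1.
have sum1 : \sum_j Psi i j = 1 by lra.
have defect0 j : Psi i j - Psi i j * \sum_l H j l = 0.
  apply: (psumr_eq0P (P := xpredT) (F := fun j => Psi i j - Psi i j * \sum_l H j l)) => //.
    by move=> l _; rewrite subr_ge0 ler_piMr ?H_rowsum_le1.
  by rewrite sumrB /=; lra.
split=> // j Psi_ij; have /eqP := defect0 j.
rewrite -{1}(mulr1 (Psi i j)) -mulrBr mulf_eq0 (gt_eqF Psi_ij) subr_eq0.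
by rewrite eq_sym => /eqP.
Qed.

Lemma F_row0_escape j : (forall l, F j l = 0) ->
  exists2 l, 0 < Tmp j l & forall j', G l j' = 0.
Proof.
move=> Fj0.
have row_eq j' : \sum_l Tmp j l * G l j' = 0 /\ (j == j')%:R + mu^-1 * Tmm j j' = 0.
  have P_ge0 := Pm_dr_nonneg j j'; rewrite !mxE in P_ge0.
  have e : - (mu^-1 * \sum_l Tmp j l * G l j') + F j j' - lam^-1 * \sum_l Tmm j l * F l j'
           = (j == j')%:R + mu^-1 * Tmm j j'.
    by have := congr1 (fun X : 'M[R]_m => X j j') eq_dr; rewrite /= !mxE.
  have TG_ge0 : 0 <= mu^-1 * \sum_l Tmp j l * G l j'.
    by rewrite mulr_ge0 ?invr_ge0 ?(ltW mu_gt0) ?sumr_ge0 // => l _; rewrite mulr_ge0.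
  have TF_ge0 : 0 <= lam^-1 * \sum_l Tmm j l * F l j'.
    rewrite mulr_ge0 ?invr_ge0 ?(ltW lam_gt0) ?sumr_ge0 // => l _.
    by have [<-|ne] := eqVneq j l; [rewrite Fj0 mulr0 | rewrite mulr_ge0 ?Tmm_offdiag].
  rewrite Fj0 in e; split; last by lra.
  have /eqP : mu^-1 * \sum_l Tmp j l * G l j' = 0 by lra.
  by rewrite mulf_eq0 invr_eq0 (gt_eqF mu_gt0) => /eqP.
have Tmm_rowsum : \sum_l Tmm j l = - mu.
  have delta_sum : \sum_l ((j == l)%:R : R) = 1.
    by rewrite (bigD1 j) //= eqxx big1 ?addr0 // => l; rewrite eq_sym => /negPf ->.
  have : \sum_l ((j == l)%:R + mu^-1 * Tmm j l) = 0.
    by rewrite big1 // => l _; case: (row_eq l).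
  rewrite big_split /= delta_sum -mulr_sumr => e.
  have : mu * (1 + mu^-1 * \sum_l Tmm j l) = 0 by rewrite e mulr0.
  by rewrite mulrDr mulr1 mulrA mulfV ?gt_eqF // mul1r; lra.
have Tmp_rowsum : \sum_l Tmp j l = mu.
  have := congr1 (fun X : 'cV[R]_m => X j 0) Tm_rowsum.
  by rewrite /= [(_ + Tmm *m _) j 0]mxE !mulmx_const1E mxE Tmm_rowsum; lra.
have [l Tjl] : exists l, 0 < Tmp j l.
  by apply: sumr_gt0_witness (Tmp_nonneg j) _; rewrite Tmp_rowsum.
exists l => // j'.
have /eqP := psumr_eq0P (P := xpredT)
  (fun l _ => mulr_ge0 (Tmp_nonneg j l) (G_nonneg l j')) (row_eq j').1 (i := l) isT.
by rewrite mulf_eq0 (gt_eqF Tjl) => /eqP.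
Qed.

Local Notation defect := (one p - Psi *m one m).

Lemma defectE l : defect l 0 = 1 - \sum_j Psi l j.
Proof. by rewrite !mxE; congr (_ - _); apply: eq_bigr => j _; rewrite mxE mulr1. Qed.

Lemma defect_ge0 l : 0 <= defect l 0.
Proof. by have := Psi_mul1_le l 0; rewrite defectE mulmx_const1E mxE subr_ge0. Qed.

Lemma riccati_Psi_mul1 : Tpp *m defect + Psi *m (Tmp *m defect) = 0.
Proof.
have := congr1 (fun X => X *m one m) riccati_Psi; rewrite /= mul0mx /riccati => e.
apply: oppr_inj; rewrite oppr0 -e.
have Tpm1 : Tpm *m one m = - (Tpp *m one p) by apply/eqP; rewrite -addr_eq0 addrC Tp_rowsum.
have Tmm1 : Tmm *m one m = - (Tmp *m one p) by apply/eqP; rewrite -addr_eq0 addrC Tm_rowsum.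
by rewrite !mulmxDl -!mulmxA Tpm1 Tmm1; mx_entrywise; ring.
Qed.

Lemma Tmp_defect0 i j : defect i 0 = 0 -> 0 < Psi i j -> (Tmp *m defect) j 0 = 0.
Proof.
move=> defect_i Psi_ij.
have Tdefect_ge0 : mx_nonneg (Tmp *m defect).
  by apply: mx_nonnegM => // l k; rewrite (ord1 k) defect_ge0.
have TppD_ge0 : 0 <= (Tpp *m defect) i 0.
  rewrite mxE sumr_ge0 // => l _; have [<-|ne] := eqVneq i l; first by rewrite defect_i mulr0.
  by rewrite mulr_ge0 ?Tpp_offdiag ?defect_ge0.
have PsiTD_ge0 : 0 <= (Psi *m (Tmp *m defect)) i 0 by apply: mx_nonnegM.
have /eqP : (Psi *m (Tmp *m defect)) i 0 = 0.
  have := congr1 (fun X : 'cV[R]_p => X i 0) riccati_Psi_mul1.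
  by rewrite /= [(_ + Psi *m _) i 0]mxE [(0 : 'cV[R]_p) i 0]mxE; lra.
rewrite mxE psumr_eq0 => [/allP/(_ j (mem_index_enum j))|l _]; last by rewrite mulr_ge0.
by rewrite mulf_eq0 (gt_eqF Psi_ij) => /eqP.
Qed.

(* If row i of Psi H 1 reached 1, then row i of Psi would sum to 1 and some j
   with Psi_ij > 0 would have a zero row in F; the generator leads from j to
   a row l where G, hence Psi, vanishes, so the defect 1 - Psi 1 equals 1 at l,
   whereas the Riccati equation forces Tmp (1 - Psi 1) to vanish at j. *)
Lemma Psi_H1_lt1 (c : R) :
  mx_cvg (fun n => iter n (fun Y => Y + c *: riccati Tpp Tpm Tmp Tmm Y) 0) Psi ->
  forall i, (Psi *m (H *m one p)) i 0 < 1.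
Proof.
move=> Psi_lim i; rewrite ltNge mxE; under eq_bigr do rewrite mulmx_const1E.
apply/negP => /Psi_row_saturated [sum1 H_sat].
have defect_i : defect i 0 = 0 by rewrite defectE sum1 subrr.
have [j Psi_ij] : exists j, 0 < Psi i j.
  by apply: sumr_gt0_witness (Psi_nonneg i) _; rewrite sum1 ltr01.
have Fj0 l : F j l = 0.
  have := congr1 (fun X : 'cV[R]_m => X j 0) H1_F1.
  rewrite /= [(_ + F *m _) j 0]mxE [one m j 0]mxE !mulmx_const1E (H_sat j Psi_ij) => e.
  have : \sum_l F j l = 0 by lra.
  by move/psumr_eq0P; apply => // l' _; apply: F_nonneg.
have [l Tjl Gl0] := F_row0_escape Fj0.
have defect_l : defect l 0 = 1.
  by rewrite defectE big1 ?subr0 // => j' _; apply: Psi_row0 Psi_lim l Gl0 j'.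
have /eqP := Tmp_defect0 defect_i Psi_ij.
rewrite mxE psumr_eq0 => [/allP/(_ l (mem_index_enum l))|l' _].
  by rewrite defect_l mulr1 (gt_eqF Tjl).
by rewrite mulr_ge0 ?Tmp_nonneg ?defect_ge0.
Qed.

End RowSupport.

Section UniformizedQBD.
Variables (R : realType) (p m : nat) (T : 'M[R]_(p + m)) (lam mu : R).
Hypothesis T_gen : is_generator T.
Hypotheses (lam_gt0 : 0 < lam) (mu_gt0 : 0 < mu).
Hypotheses (T_lam : forall i, `|T i i| <= lam) (T_mu : forall i, `|T i i| <= mu).

Local Notation Tpp := (ulsubmx T).
Local Notation Tpm := (ursubmx T).
Local Notation Tmp := (dlsubmx T).
Local Notation Tmm := (drsubmx T).
Local Notation Pl := (Pmx lam T).
Local Notation Pm := (Pmx mu T).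
Local Notation one k := (const_mx 1 : 'cV[R]_k).

Ltac field_pos := field;
  rewrite ?(lt0r_neq0 lam_gt0) ?(lt0r_neq0 mu_gt0) ?pnatr_eq0 ?andbT //.

Definition qbdCm1 : 'M[R]_(p + m) := 2^-1 *: block_mx 0 (ursubmx Pm) 0 (drsubmx Pm).
Definition qbdC0 : 'M[R]_(p + m) :=
  2^-1 *: block_mx (ulsubmx Pm) (ursubmx Pl) (dlsubmx Pm) (drsubmx Pl).
Definition qbdC1 : 'M[R]_(p + m) := 2^-1 *: block_mx (ulsubmx Pl) 0 (dlsubmx Pl) 0.
Definition qbdA : 'M[R]_(p + m) := 1%:M - qbdC0.
Definition qbdC : 'M[R]_(p + m, p) := 2^-1 *: col_mx (ulsubmx Pl) (dlsubmx Pl).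
Definition qbdD : 'M[R]_(p + m, m) := 2^-1 *: col_mx (ursubmx Pm) (drsubmx Pm).

(* Column j of C'_0 is uniformized with rate mu on S_+ and lam on S_-. *)
Definition rate (j : 'I_(p + m)) : R := if (j < p)%N then mu else lam.

Lemma rate_gt0 j : 0 < rate j.
Proof. by rewrite /rate; case: ifP. Qed.

Lemma PmxE a i j : Pmx a T i j = (i == j)%:R + a^-1 * T i j.
Proof. by rewrite !mxE. Qed.

Lemma Pmx_block a :
  Pmx a T = block_mx (1%:M + a^-1 *: Tpp) (a^-1 *: Tpm) (a^-1 *: Tmp) (1%:M + a^-1 *: Tmm).
Proof.
by rewrite /Pmx -{1}[T]submxK (scalar_mx_block p m) scale_block_mx add_block_mx ?addr0 ?add0r.
Qed.

Lemma qbdC0E i j : qbdC0 i j = 2^-1 * ((i == j)%:R + (rate j)^-1 * T i j).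
Proof.
rewrite /qbdC0 /rate mxE.
case: (split_ordP i) => i' ->; case: (split_ordP j) => j' ->;
rewrite ?block_mxEul ?block_mxEur ?block_mxEdl ?block_mxEdr !mxE ?eq_shift //=.
all: by rewrite ?ltn_ord // ltnNge leq_addr.
Qed.

Lemma qbdC1E i j : qbdC1 i j = if (j < p)%N then 2^-1 * Pl i j else 0.
Proof.
rewrite /qbdC1 mxE.
case: (split_ordP i) => i' ->; case: (split_ordP j) => j' ->;
rewrite ?block_mxEul ?block_mxEur ?block_mxEdl ?block_mxEdr ?mxE /= ?ltn_ord
  ?(ltnNge p (p + _)) ?leq_addr ?mulr0 //.
Qed.

Lemma qbdCm1E i j : qbdCm1 i j = if (j < p)%N then 0 else 2^-1 * Pm i j.
Proof.
rewrite /qbdCm1 mxE.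
case: (split_ordP i) => i' ->; case: (split_ordP j) => j' ->;
rewrite ?block_mxEul ?block_mxEur ?block_mxEdl ?block_mxEdr ?mxE /= ?ltn_ord
  ?(ltnNge p (p + _)) ?leq_addr ?mulr0 //.
Qed.

Lemma qbdC1_row : qbdC1 = row_mx qbdC 0.
Proof. by rewrite /qbdC1 /qbdC block_mxEh col_mx0 scale_row_mx scaler0. Qed.

Lemma qbdCm1_row : qbdCm1 = row_mx 0 qbdD.
Proof. by rewrite /qbdCm1 /qbdD block_mxEh col_mx0 scale_row_mx scaler0. Qed.

Lemma T_offdiag i j : i != j -> 0 <= T i j.
Proof. by case: T_gen => h _; apply: h. Qed.

Lemma T_rowsum i : \sum_j T i j = 0.
Proof. by case: T_gen => _ ->. Qed.

Lemma Pmx_nonneg a : 0 < a -> (forall i, `|T i i| <= a) -> mx_nonneg (Pmx a T).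
Proof.
move=> a_gt0 T_a i j; rewrite PmxE.
have [<-|ne] := eqVneq i j; last first.
  by rewrite mulr0n add0r mulr_ge0 ?T_offdiag // invr_ge0 ltW.
have := T_a i; rewrite mulr1n ler_norml => /andP[Tii _].
have -> : 1 + a^-1 * T i i = a^-1 * (a + T i i) by rewrite mulrDr mulVf ?gt_eqF.
by apply: mulr_ge0; [rewrite invr_ge0 ltW | lra].
Qed.

Lemma Pmx_rowsum a i : \sum_j Pmx a T i j = 1.
Proof.
under eq_bigr do rewrite PmxE.
rewrite big_split /= -mulr_sumr T_rowsum mulr0 addr0.
by rewrite (bigD1 i) //= eqxx big1 ?addr0 // => j /negPf; rewrite eq_sym => ->.
Qed.

Lemma Pl_nonneg : mx_nonneg Pl. Proof. exact: Pmx_nonneg. Qed.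
Lemma Pm_nonneg : mx_nonneg Pm. Proof. exact: Pmx_nonneg. Qed.

Lemma qbdC0_nonneg : mx_nonneg qbdC0.
Proof.
move=> i j; have := Pm_nonneg i j; have := Pl_nonneg i j.
rewrite qbdC0E /rate !PmxE; case: (j < p)%N => h1 h2.
all: by rewrite mulr_ge0 // invr_ge0 ler0n.
Qed.

Lemma qbdC_nonneg : mx_nonneg qbdC.
Proof.
apply: mx_nonnegZ; first by rewrite invr_ge0 ler0n.
by apply: mx_nonneg_col; [apply: mx_nonneg_ulsub | apply: mx_nonneg_dlsub];
  apply: Pl_nonneg.
Qed.

Lemma qbdD_nonneg : mx_nonneg qbdD.
Proof.
apply: mx_nonnegZ; first by rewrite invr_ge0 ler0n.
by apply: mx_nonneg_col; [apply: mx_nonneg_ursub | apply: mx_nonneg_drsub];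
  apply: Pm_nonneg.
Qed.

Lemma qbd_rowsum i : \sum_j (qbdC0 + qbdC1 + qbdCm1) i j = 1.
Proof.
have -> : \sum_j (qbdC0 + qbdC1 + qbdCm1) i j = 2^-1 * (\sum_j Pl i j + \sum_j Pm i j).
  rewrite -big_split mulr_sumr; apply: eq_bigr => j _ /=.
  rewrite mxE [(qbdC0 + _) _ _]mxE qbdC0E qbdC1E qbdCm1E /rate !PmxE.
  by case: (j < p)%N; field_pos.
by rewrite !Pmx_rowsum; field_pos.
Qed.

Lemma qbdAE i j : qbdA i j = (i == j)%:R - qbdC0 i j.
Proof. by rewrite !mxE. Qed.

(* A maps the vector of rates to half of itself. *)
Lemma qbdA_unit_inv_nonneg : qbdA \in unitmx /\ mx_nonneg (invmx qbdA).
Proof.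
pose v : 'cV[R]_(p + m) := \col_i rate i.
have vE j : v j 0 = rate j by rewrite mxE.
apply: (@Zmx_unit_inv_nonneg _ _ _ v) => [i j ne|i|i].
- by rewrite qbdAE (negPf ne) sub0r oppr_le0 qbdC0_nonneg.
- by rewrite vE rate_gt0.
have C0_rate j : qbdC0 i j * rate j = 2^-1 * ((i == j)%:R * rate j + T i j).
  by rewrite qbdC0E; field; rewrite gt_eqF ?rate_gt0.
have C0v : (qbdC0 *m v) i 0 = 2^-1 * rate i.
  rewrite mxE; under eq_bigr do rewrite vE C0_rate.
  rewrite -mulr_sumr big_split /= T_rowsum addr0 (bigD1 i) //= eqxx mul1r.
  by rewrite big1 ?addr0 // => j /negPf; rewrite eq_sym => ->; rewrite mul0r.
have -> : (qbdA *m v) i 0 = v i 0 - (qbdC0 *m v) i 0.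
  by rewrite /qbdA mulmxBl mul1mx !mxE.
rewrite C0v vE.
have -> : rate i - 2^-1 * rate i = 2^-1 * rate i by field.
by rewrite mulr_gt0 ?invr_gt0 ?ltr0n ?rate_gt0.
Qed.

Lemma qbdA_unit : qbdA \in unitmx. Proof. by case: qbdA_unit_inv_nonneg. Qed.

Definition EGHF_den : 'M[R]_(p + m) :=
  block_mx (1%:M - mu^-1 *: Tpp) (- (lam^-1 *: Tpm))
           (- (mu^-1 *: Tmp)) (1%:M - lam^-1 *: Tmm).
Definition EGHF_num : 'M[R]_(p + m) :=
  block_mx (1%:M + lam^-1 *: Tpp) (mu^-1 *: Tpm)
           (lam^-1 *: Tmp) (1%:M + mu^-1 *: Tmm).

Lemma EGHF_denE : EGHF_den = 2 *: qbdA.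
Proof.
apply/matrixP => i j; rewrite [in RHS]mxE qbdAE qbdC0E /rate /EGHF_den.
case: (split_ordP i) => i' ->; case: (split_ordP j) => j' ->;
rewrite ?block_mxEul ?block_mxEur ?block_mxEdl ?block_mxEdr !mxE ?eq_shift /= ?ltn_ord
  ?(ltnNge p (p + _)) ?leq_addr /=; field_pos.
Qed.

Lemma EGHF_numE : EGHF_num = 2 *: row_mx qbdC qbdD.
Proof.
apply/matrixP => i j; rewrite /EGHF_num /qbdC /qbdD [in RHS]mxE.
case: (split_ordP i) => i' ->; case: (split_ordP j) => j' ->;
rewrite ?block_mxEul ?block_mxEur ?block_mxEdl ?block_mxEdr ?row_mxEl ?row_mxEr
  [in RHS]mxE ?col_mxEu ?col_mxEd !mxE ?eq_shift /=; field_pos.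
Qed.

Lemma EGHF_den_unit : EGHF_den \in unitmx.
Proof. by rewrite EGHF_denE unitmxZ ?qbdA_unit // unitfE pnatr_eq0. Qed.

Lemma EGHF_den_mul : EGHF_den *m EGHF lam mu T = EGHF_num.
Proof. by rewrite /EGHF -/EGHF_den -/EGHF_num mulKVmx // EGHF_den_unit. Qed.

Lemma EGHFE : EGHF lam mu T = invmx qbdA *m row_mx qbdC qbdD.
Proof.
rewrite /EGHF -/EGHF_den -/EGHF_num EGHF_denE EGHF_numE invmxZ; last first.
  by rewrite unitmxZ ?qbdA_unit // unitfE pnatr_eq0.
by rewrite -scalemxAl -scalemxAr scalerA mulVf ?pnatr_eq0 // scale1r.
Qed.

Local Notation ric := (riccati Tpp Tpm Tmp Tmm).

Definition riccati_step (Y : 'M[R]_(p, m)) := Y + (2 * lam)^-1 *: ric Y.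

Lemma riccati_stepE Y : riccati_step Y =
  2^-1 *: (ursubmx Pl + Y *m drsubmx Pl + ulsubmx Pl *m Y + Y *m dlsubmx Pl *m Y).
Proof.
rewrite /riccati_step /riccati Pmx_block block_mxKul block_mxKur block_mxKdl block_mxKdr.
by mx_entrywise; field_pos.
Qed.

Definition cayley_den (Y : 'M[R]_(p, m)) : 'M[R]_m := 1%:M - lam^-1 *: (Tmp *m Y + Tmm).
Definition cayley_num (Y : 'M[R]_(p, m)) : 'M[R]_m := 1%:M + mu^-1 *: (Tmp *m Y + Tmm).

Lemma EGHF_col_defect (Y : 'M[R]_(p, m)) (Q : 'M[R]_m) :
  EGHF_den *m col_mx Y Q - EGHF_num *m col_mx (Y *m Q) 1%:M =
  col_mx (- (ric Y *m (mu^-1 *: 1%:M + lam^-1 *: Q))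
            - Y *m (cayley_den Y *m Q - cayley_num Y))
         (cayley_den Y *m Q - cayley_num Y).
Proof.
rewrite /EGHF_den /EGHF_num !mul_block_col opp_col_mx add_col_mx.
by rewrite /riccati /cayley_den /cayley_num; congr col_mx; mx_entrywise; field_pos.
Qed.

Lemma Pmx_mul1 a : Pmx a T *m one (p + m) = one (p + m).
Proof. by apply/matrixP => i j; rewrite mulmx_const1E Pmx_rowsum mxE. Qed.

Lemma Pl_rowsum_top : ulsubmx Pl *m one p + ursubmx Pl *m one m = one p.
Proof.
have := Pmx_mul1 lam.
by rewrite mulmx_const1_block (col_mx_const p m 1 (1 : R)) => /eq_col_mx [].
Qed.

Lemma Pl_rowsum_bot : dlsubmx Pl *m one p + drsubmx Pl *m one m = one m.
Proof.
have := Pmx_mul1 lam.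
by rewrite mulmx_const1_block (col_mx_const p m 1 (1 : R)) => /eq_col_mx [].
Qed.

Lemma Tp_rowsum : Tpp *m one p + Tpm *m one m = 0.
Proof.
have T1 : T *m one (p + m) = 0.
  by apply/matrixP => i j; rewrite mulmx_const1E T_rowsum mxE.
by move: T1; rewrite mulmx_const1_block -(col_mx0 _ p m 1) => /eq_col_mx [].
Qed.

Lemma Tm_rowsum : Tmp *m one p + Tmm *m one m = 0.
Proof.
have T1 : T *m one (p + m) = 0.
  by apply/matrixP => i j; rewrite mulmx_const1E T_rowsum mxE.
by move: T1; rewrite mulmx_const1_block -(col_mx0 _ p m 1) => /eq_col_mx [].
Qed.

Lemma Tpp_offdiag k l : k != l -> 0 <= Tpp k l.
Proof. by move=> ne; rewrite !mxE T_offdiag // eq_lshift. Qed.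

Lemma Tmm_offdiag k l : k != l -> 0 <= Tmm k l.
Proof. by move=> ne; rewrite !mxE T_offdiag // eq_rshift. Qed.

Lemma Tpm_nonneg : mx_nonneg Tpm.
Proof. by move=> k l; rewrite !mxE T_offdiag // eq_lrshift. Qed.

Lemma Tmp_nonneg : mx_nonneg Tmp.
Proof. by move=> k l; rewrite !mxE T_offdiag // eq_rlshift. Qed.

Lemma Pm_dr_nonneg : mx_nonneg (1%:M + mu^-1 *: Tmm).
Proof. by have := mx_nonneg_drsub Pm_nonneg; rewrite Pmx_block block_mxKdr. Qed.

Variable Psi : 'M[R]_(p, m).
Hypothesis Psi_min : is_min_nonneg_sol ric Psi.

Local Notation M := (EGHF lam mu T).
Local Notation E := (ulsubmx M).
Local Notation G := (ursubmx M).
Local Notation H := (dlsubmx M).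
Local Notation F := (drsubmx M).
Local Notation alpha := (usubmx (invmx qbdA)).
Local Notation beta := (dsubmx (invmx qbdA)).

Lemma EGHF_block :
  M = block_mx (alpha *m qbdC) (alpha *m qbdD) (beta *m qbdC) (beta *m qbdD).
Proof. by rewrite EGHFE -{1}[invmx qbdA]vsubmxK mul_col_row. Qed.

Lemma EGHF_ul : E = alpha *m qbdC. Proof. by rewrite EGHF_block block_mxKul. Qed.
Lemma EGHF_ur : G = alpha *m qbdD. Proof. by rewrite EGHF_block block_mxKur. Qed.
Lemma EGHF_dl : H = beta *m qbdC. Proof. by rewrite EGHF_block block_mxKdl. Qed.
Lemma EGHF_dr : F = beta *m qbdD. Proof. by rewrite EGHF_block block_mxKdr. Qed.

Lemma alpha_nonneg : mx_nonneg alpha.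
Proof. by apply: mx_nonneg_usub; case: qbdA_unit_inv_nonneg. Qed.

Lemma beta_nonneg : mx_nonneg beta.
Proof. by apply: mx_nonneg_dsub; case: qbdA_unit_inv_nonneg. Qed.

Lemma E_nonneg : mx_nonneg E.
Proof. by rewrite EGHF_ul; apply: mx_nonnegM alpha_nonneg qbdC_nonneg. Qed.
Lemma G_nonneg : mx_nonneg G.
Proof. by rewrite EGHF_ur; apply: mx_nonnegM alpha_nonneg qbdD_nonneg. Qed.
Lemma H_nonneg : mx_nonneg H.
Proof. by rewrite EGHF_dl; apply: mx_nonnegM beta_nonneg qbdC_nonneg. Qed.
Lemma F_nonneg : mx_nonneg F.
Proof. by rewrite EGHF_dr; apply: mx_nonnegM beta_nonneg qbdD_nonneg. Qed.

Lemma EGHF_mul1 : M *m one (p + m) = one (p + m).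
Proof.
have CD_mul1 : row_mx qbdC qbdD *m one (p + m) = qbdA *m one (p + m).
  have C_mul1 : (qbdC0 + qbdC1 + qbdCm1) *m one (p + m) = one (p + m).
    by apply/matrixP => i j; rewrite mulmx_const1E qbd_rowsum mxE.
  rewrite /qbdA mulmxBl mul1mx -[X in X - _]C_mul1 qbdC1_row qbdCm1_row -addrA.
  by rewrite add_row_mx addr0 add0r mulmxDl addrC addKr.
by rewrite EGHFE -mulmxA CD_mul1 mulKmx // qbdA_unit.
Qed.

Lemma H1_F1 : H *m one p + F *m one m = one m.
Proof.
by have := EGHF_mul1; rewrite mulmx_const1_block (col_mx_const p m 1 (1 : R)) => /eq_col_mx [].
Qed.

Lemma EGHF_eq_ur : G - mu^-1 *: (Tpp *m G) - lam^-1 *: (Tpm *m F) = mu^-1 *: Tpm.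
Proof.
have := EGHF_den_mul; rewrite -{1}[M]submxK /EGHF_den /EGHF_num mulmx_block.
by move=> /eq_block_mx [_ <- _ _]; mx_entrywise; ring.
Qed.

Lemma EGHF_eq_dr :
  - (mu^-1 *: (Tmp *m G)) + F - lam^-1 *: (Tmm *m F) = 1%:M + mu^-1 *: Tmm.
Proof.
have := EGHF_den_mul; rewrite -{1}[M]submxK /EGHF_den /EGHF_num mulmx_block.
by move=> /eq_block_mx [_ _ _ <-]; mx_entrywise; ring.
Qed.

Lemma Psi_nonneg : mx_nonneg Psi. Proof. by case: Psi_min. Qed.
Lemma riccati_Psi : ric Psi = 0. Proof. by case: Psi_min. Qed.
Lemma Psi_le Y : mx_nonneg Y -> ric Y = 0 -> mx_le Psi Y.
Proof. by case: Psi_min => _ _; apply. Qed.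

Lemma riccati_step_mono X Y :
  mx_nonneg X -> mx_le X Y -> mx_le (riccati_step X) (riccati_step Y).
Proof.
move=> X_ge0 XY; have Y_ge0 := mx_nonneg_le X_ge0 XY; rewrite !riccati_stepE.
apply: mx_leZ; first by rewrite invr_ge0 ler0n.
apply: mx_leD; [apply: mx_leD; [apply: mx_leD|]|] => //.
- by apply: mx_le_mul2r => //; apply: mx_nonneg_drsub Pl_nonneg.
- by apply: mx_le_mul2l => //; apply: mx_nonneg_ulsub Pl_nonneg.
apply: mx_le_mul => //; last by apply: mx_le_mul2r => //; apply: mx_nonneg_dlsub Pl_nonneg.
by apply: mx_nonnegM => //; apply: mx_nonneg_dlsub Pl_nonneg.
Qed.

Lemma riccati_step_nonneg X : mx_nonneg X -> mx_nonneg (riccati_step X).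
Proof.
move=> X_ge0; rewrite riccati_stepE; apply: mx_nonnegZ; first by rewrite invr_ge0 ler0n.
have Pl_ge0 := Pl_nonneg.
apply: mx_nonnegD; [apply: mx_nonnegD; [apply: mx_nonnegD|]|].
- exact: mx_nonneg_ursub.
- by apply: mx_nonnegM => //; apply: mx_nonneg_drsub.
- by apply: mx_nonnegM => //; apply: mx_nonneg_ulsub.
- by apply: mx_nonnegM => //; apply: mx_nonnegM => //; apply: mx_nonneg_dlsub.
Qed.

Lemma riccati_step_cvg X L :
  mx_cvg X L -> mx_cvg (fun k => riccati_step (X k)) (riccati_step L).
Proof.
move=> XL; apply: mx_cvgD => //; apply: mx_cvgZ.
apply: mx_cvgD; [apply: mx_cvgD; [apply: mx_cvgD|]|].
- exact: mx_cvg_cst.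
- exact: mx_cvgMr.
- exact: mx_cvgMl.
- by apply: mx_cvgM => //; apply: mx_cvgMr.
Qed.

Lemma riccati_step_iter_nonneg k : mx_nonneg (iter k riccati_step 0).
Proof.
by elim: k => [|k IH] /=; [apply: mx_nonneg0 | apply: riccati_step_nonneg].
Qed.

Lemma Psi_iter_cvg : mx_cvg (fun k => iter k riccati_step 0) Psi.
Proof.
have Psi_fix : riccati_step Psi = Psi by rewrite /riccati_step riccati_Psi scaler0 addr0.
have [L [L_lim L_ge0 L_le L_fix]] :=
  iter_cvg_fixpoint riccati_step_mono riccati_step_nonneg riccati_step_cvg Psi_nonneg Psi_fix.
suff -> : Psi = L by [].
apply: mx_le_anti (Psi_le L_ge0 _) L_le.
have /addrI/eqP : L + (2 * lam)^-1 *: ric L = L + 0 by rewrite addr0.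
by rewrite scaler_eq0 invr_eq0 mulf_eq0 pnatr_eq0 (gt_eqF lam_gt0) => /eqP.
Qed.

Lemma Psi_mul1_le : mx_le (Psi *m one m) (one p).
Proof.
apply: (mx_cvg_le (mx_cvgMr (C := one m) Psi_iter_cvg)); elim=> [|k IH] /=.
  by rewrite mul0mx => i j; rewrite !mxE ler01.
set Y := iter k _ 0 in IH *; have Y_ge0 := riccati_step_iter_nonneg k.
have Pl_ge0 := Pl_nonneg.
have step_le : mx_le (riccati_step Y *m one m)
   (2^-1 *: (ursubmx Pl *m one m + Y *m drsubmx Pl *m one m
             + ulsubmx Pl *m one p + Y *m dlsubmx Pl *m one p)).
  rewrite riccati_stepE -scalemxAl !mulmxDl.
  apply: mx_leZ; first by rewrite invr_ge0 ler0n.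
  apply: mx_leD; first by apply: mx_leD => //; rewrite -!mulmxA;
    apply: mx_le_mul2l => //; apply: mx_nonneg_ulsub.
  by rewrite -!mulmxA; apply: mx_le_mul2l => //; apply: mx_le_mul2l => //;
    apply: mx_nonneg_dlsub.
apply: (mx_le_trans step_le).
have -> : ursubmx Pl *m one m + Y *m drsubmx Pl *m one m +
          ulsubmx Pl *m one p + Y *m dlsubmx Pl *m one p = one p + Y *m one m.
  transitivity (ulsubmx Pl *m one p + ursubmx Pl *m one m +
                Y *m (dlsubmx Pl *m one p + drsubmx Pl *m one m)).
    by mx_entrywise; ring.
  by rewrite Pl_rowsum_top Pl_rowsum_bot.
by move=> i j; have := IH i j; rewrite !mxE; lra.
Qed.
Lemma I_sub_YH_unit_inv_nonneg (Y : 'M[R]_(p, m)) : mx_nonneg Y -> mx_le Y Psi ->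
  (1%:M - Y *m H) \in unitmx /\ mx_nonneg (invmx (1%:M - Y *m H)).
Proof.
move=> Y_ge0 Y_le.
have PsiH1_lt1 := Psi_H1_lt1 lam_gt0 mu_gt0 Tpp_offdiag Tmm_offdiag Tpm_nonneg Tmp_nonneg
  Tp_rowsum Tm_rowsum Pm_dr_nonneg G_nonneg H_nonneg F_nonneg Psi_nonneg
  EGHF_eq_ur EGHF_eq_dr H1_F1 Psi_mul1_le riccati_Psi Psi_iter_cvg.
apply: (@Zmx_unit_inv_nonneg _ _ _ (one p)) => [i j ne|i|i].
- rewrite !mxE (negPf ne) mulr0n sub0r oppr_le0.
  by apply: sumr_ge0 => l _; apply: mulr_ge0 => //; apply: H_nonneg.
- by rewrite mxE ltr01.
rewrite mulmxBl mul1mx -mulmxA [(one p - _) i 0]mxE [(- _ : 'cV_p) i 0]mxE mxE subr_gt0.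
apply: le_lt_trans (PsiH1_lt1 i).
suff /(_ i 0) : mx_le (Y *m (H *m one p)) (Psi *m (H *m one p)) by [].
by apply: mx_le_mul2r => //; apply: mx_nonnegM H_nonneg _ => ? ?; rewrite mxE.
Qed.

Lemma cayley_den_unit (Y : 'M[R]_(p, m)) :
  mx_nonneg Y -> mx_le (Y *m one m) (one p) -> cayley_den Y \in unitmx.
Proof.
move=> Y_ge0 Y1_le.
suff [] : cayley_den Y \in unitmx /\ mx_nonneg (invmx (cayley_den Y)) by [].
apply: (@Zmx_unit_inv_nonneg _ _ _ (one m)) => [i j ne|i|i].
- rewrite /cayley_den !mxE (negPf ne) mulr0n sub0r oppr_le0.
  rewrite mulr_ge0 ?invr_ge0 ?(ltW lam_gt0) // addr_ge0 //; last first.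
    by have := Tmm_offdiag ne; rewrite !mxE.
  by apply: sumr_ge0 => l _; apply: mulr_ge0 => //; apply: Tmp_nonneg.
- by rewrite mxE ltr01.
have U1_le0 : mx_le ((Tmp *m Y + Tmm) *m one m) 0.
  rewrite mulmxDl -mulmxA.
  have -> : Tmm *m one m = - (Tmp *m one p) by apply/eqP; rewrite -addr_eq0 addrC Tm_rowsum.
  by move=> a b; move: (mx_le_mul2l Tmp_nonneg Y1_le a b); rewrite !mxE subr_le0.
rewrite /cayley_den mulmxBl mul1mx -scalemxAl.
have lam_inv_gt0 : 0 < lam^-1 by rewrite invr_gt0.
by move: (U1_le0 i 0); rewrite !mxE => U1_i; nra.
Qed.

Lemma EGHF_col (Y : 'M[R]_(p, m)) (Q : 'M[R]_m) :
  EGHF_den *m col_mx Y Q = EGHF_num *m col_mx (Y *m Q) 1%:M ->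
  M *m col_mx (Y *m Q) 1%:M = col_mx Y Q.
Proof.
move=> e; rewrite /EGHF -/EGHF_den -/EGHF_num -mulmxA -e.
by rewrite mulmxA mulVmx ?EGHF_den_unit // mul1mx.
Qed.

(* EGHF_col_defect isolates ric Y times the invertible matrix
   (mu^-1 + lam^-1) (cayley_den Y)^-1. *)
Lemma riccati_of_EGHF_col (Y : 'M[R]_(p, m)) (Q : 'M[R]_m) :
  mx_nonneg Y -> mx_le (Y *m one m) (one p) ->
  M *m col_mx (Y *m Q) 1%:M = col_mx Y Q -> ric Y = 0.
Proof.
move=> Y_ge0 Y1_le MYQ.
have : EGHF_den *m col_mx Y Q - EGHF_num *m col_mx (Y *m Q) 1%:M = 0.
  by rewrite -MYQ mulmxA EGHF_den_mul subrr.
rewrite EGHF_col_defect -(col_mx0 _ p m m) => /eq_col_mx [e1 e2].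
have cQ : cayley_den Y *m Q = cayley_num Y by apply/eqP; rewrite -subr_eq0 e2.
have c_unit := cayley_den_unit Y_ge0 Y1_le.
have cX : cayley_den Y *m (mu^-1 *: 1%:M + lam^-1 *: Q) = (mu^-1 + lam^-1) *: 1%:M.
  by rewrite mulmxDr -!scalemxAr cQ /cayley_den /cayley_num; mx_entrywise; field_pos.
have X_inv : mu^-1 *: 1%:M + lam^-1 *: Q = (mu^-1 + lam^-1) *: invmx (cayley_den Y).
  by rewrite -[LHS](mulKmx c_unit) cX -scalemxAr mulmx1.
have s_neq0 : mu^-1 + lam^-1 != 0 by rewrite gt_eqF // addr_gt0 // invr_gt0.
move: e1; rewrite e2 mulmx0 subr0 => /eqP; rewrite oppr_eq0 X_inv -scalemxAr.
rewrite scaler_eq0 (negPf s_neq0) /= => /eqP e1.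
by rewrite -[ric Y](mulmxKV c_unit) e1 mul0mx.
Qed.

Local Notation Q0 := (invmx (cayley_den Psi) *m cayley_num Psi).

Lemma EGHF_col_Psi : M *m col_mx (Psi *m Q0) 1%:M = col_mx Psi Q0.
Proof.
have c_unit := cayley_den_unit Psi_nonneg Psi_mul1_le.
have cQ0 : cayley_den Psi *m Q0 = cayley_num Psi by rewrite mulmxA mulmxV // mul1mx.
apply: EGHF_col; apply/eqP; rewrite -subr_eq0 EGHF_col_defect cQ0 subrr riccati_Psi.
by rewrite mul0mx mulmx0 oppr0 addr0 col_mx0.
Qed.

Lemma EGHF_Psi_top : E *m (Psi *m Q0) + G = Psi.
Proof.
by have := EGHF_col_Psi; rewrite -{1}[M]submxK mul_block_col !mulmx1 => /eq_col_mx [].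
Qed.

Lemma EGHF_Psi_bot : H *m (Psi *m Q0) + F = Q0.
Proof.
by have := EGHF_col_Psi; rewrite -{1}[M]submxK mul_block_col !mulmx1 => /eq_col_mx [].
Qed.

Local Notation R1 := (E *m invmx (1%:M - Psi *m H)).

Lemma I_sub_PsiH_unit : (1%:M - Psi *m H) \in unitmx.
Proof. by case: (I_sub_YH_unit_inv_nonneg Psi_nonneg (mx_le_refl _)). Qed.

Lemma R1_nonneg : mx_nonneg R1.
Proof.
apply: mx_nonnegM E_nonneg _.
by case: (I_sub_YH_unit_inv_nonneg Psi_nonneg (mx_le_refl _)).
Qed.

Lemma R1_mul : R1 *m (1%:M - Psi *m H) = E.
Proof. by rewrite -mulmxA mulVmx ?I_sub_PsiH_unit // mulmx1. Qed.

Lemma R1_fix : R1 = E + R1 *m Psi *m H.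
Proof. by rewrite -{2}R1_mul mulmxBr mulmx1 mulmxA subrK. Qed.

Lemma Psi_fix : Psi = G + R1 *m Psi *m F.
Proof.
have -> : F = Q0 - H *m (Psi *m Q0) by rewrite -[X in X - _]EGHF_Psi_bot addrAC subrr add0r.
have -> : R1 *m Psi *m (Q0 - H *m (Psi *m Q0)) = R1 *m (1%:M - Psi *m H) *m (Psi *m Q0).
  by mx_entrywise; ring.
by rewrite R1_mul addrC EGHF_Psi_top.
Qed.

Local Notation Gamma := (alpha + R1 *m Psi *m beta).

Lemma Gamma_C : Gamma *m qbdC = R1.
Proof. by rewrite mulmxDl -!mulmxA -EGHF_ul -EGHF_dl !mulmxA -R1_fix. Qed.

Lemma Gamma_D : Gamma *m qbdD = Psi.
Proof. by rewrite mulmxDl -!mulmxA -EGHF_ur -EGHF_dr !mulmxA -Psi_fix. Qed.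

Lemma Gamma_nonneg : mx_nonneg Gamma.
Proof.
apply: mx_nonnegD alpha_nonneg _; apply: mx_nonnegM beta_nonneg.
exact: mx_nonnegM R1_nonneg Psi_nonneg.
Qed.

Definition gamma_step (X : 'M[R]_(p, p + m)) := alpha + X *m qbdC *m (X *m qbdD) *m beta.

Lemma gamma_step_mono X Y :
  mx_nonneg X -> mx_le X Y -> mx_le (gamma_step X) (gamma_step Y).
Proof.
move=> X_ge0 XY; have Y_ge0 := mx_nonneg_le X_ge0 XY.
apply: mx_leD => //; apply: mx_le_mul2r beta_nonneg _.
apply: mx_le_mul; first exact: mx_nonnegM X_ge0 qbdC_nonneg.
- exact: mx_nonnegM Y_ge0 qbdD_nonneg.
- exact: mx_le_mul2r qbdC_nonneg XY.
- exact: mx_le_mul2r qbdD_nonneg XY.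
Qed.

Lemma gamma_step_nonneg X : mx_nonneg X -> mx_nonneg (gamma_step X).
Proof.
move=> X_ge0; apply: mx_nonnegD alpha_nonneg _; apply: mx_nonnegM beta_nonneg.
by apply: mx_nonnegM; apply: mx_nonnegM X_ge0 _; [apply: qbdC_nonneg | apply: qbdD_nonneg].
Qed.

Lemma gamma_step_cvg X L :
  mx_cvg X L -> mx_cvg (fun k => gamma_step (X k)) (gamma_step L).
Proof.
move=> XL; apply: mx_cvgD; first exact: mx_cvg_cst.
by apply: mx_cvgMr; apply: mx_cvgM; apply: mx_cvgMr.
Qed.

Lemma gamma_step_Gamma : gamma_step Gamma = Gamma.
Proof. by rewrite /gamma_step Gamma_C Gamma_D. Qed.

Lemma EGHF_col_of_fixpoint (h : 'M[R]_p) (k : 'M[R]_(p, m)) :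
  (1%:M - k *m H) \in unitmx -> h = E + h *m k *m H -> k = G + h *m k *m F ->
  exists Q, M *m col_mx (k *m Q) 1%:M = col_mx k Q.
Proof.
move=> kH_unit h_fix k_fix.
have E_fact : E = h *m (1%:M - k *m H) by rewrite mulmxBr mulmx1 mulmxA {1}h_fix addrK.
pose Q := F + H *m invmx (1%:M - k *m H) *m k *m F.
have HkQ : (1%:M - H *m k) *m Q = F.
  transitivity (F - H *m k *m F + H *m ((1%:M - k *m H) *m invmx (1%:M - k *m H)) *m k *m F).
    by rewrite /Q; mx_entrywise; ring.
  by rewrite mulmxV // mulmx1 subrK.
exists Q; clearbody Q; rewrite -{1}[M]submxK mul_block_col !mulmx1; congr col_mx.
  have -> : E *m (k *m Q) = h *m k *m ((1%:M - H *m k) *m Q).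
    by rewrite E_fact; mx_entrywise; ring.
  by rewrite HkQ addrC -k_fix.
by rewrite -HkQ; mx_entrywise; ring.
Qed.

(* The blocks L C and L D satisfy the fixed-point equations of R1 and Psi, so
   L D solves the Riccati equation and equals Psi by minimality. *)
Lemma gamma_step_fix_eq L : mx_nonneg L -> mx_le L Gamma -> gamma_step L = L -> L = Gamma.
Proof.
move=> L_ge0 L_le L_fix.
have h_fix : L *m qbdC = E + L *m qbdC *m (L *m qbdD) *m H.
  by rewrite -{1}L_fix /gamma_step mulmxDl EGHF_ul -!mulmxA -EGHF_dl.
have k_fix : L *m qbdD = G + L *m qbdC *m (L *m qbdD) *m F.
  by rewrite -{1}L_fix /gamma_step mulmxDl EGHF_ur -!mulmxA -EGHF_dr.
have k_ge0 : mx_nonneg (L *m qbdD) by apply: mx_nonnegM L_ge0 qbdD_nonneg.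
have k_le : mx_le (L *m qbdD) Psi by rewrite -Gamma_D; apply: mx_le_mul2r qbdD_nonneg L_le.
have k1_le : mx_le (L *m qbdD *m one m) (one p).
  by apply: mx_le_trans Psi_mul1_le; apply: mx_le_mul2r k_le => ? ?; rewrite mxE.
have [kH_unit _] := I_sub_YH_unit_inv_nonneg k_ge0 k_le.
have [Q MkQ] := EGHF_col_of_fixpoint kH_unit h_fix k_fix.
have k_Psi : L *m qbdD = Psi.
  by apply: mx_le_anti k_le (Psi_le k_ge0 (riccati_of_EGHF_col k_ge0 k1_le MkQ)).
have h_R1 : L *m qbdC = R1.
  have h_mul : L *m qbdC *m (1%:M - Psi *m H) = E.
    by rewrite mulmxBr mulmx1 mulmxA {1}h_fix k_Psi addrK.
  by rewrite -h_mul mulmxK // I_sub_PsiH_unit.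
by rewrite -L_fix /gamma_step h_R1 k_Psi.
Qed.

Lemma gamma_iter_cvg : mx_cvg (fun k => iter k gamma_step 0) Gamma.
Proof.
have [L [L_lim L_ge0 L_le L_fix]] := iter_cvg_fixpoint gamma_step_mono
  gamma_step_nonneg gamma_step_cvg Gamma_nonneg gamma_step_Gamma.
by rewrite -(gamma_step_fix_eq L_ge0 L_le L_fix).
Qed.

Local Notation qbd_eqn := (fun X : 'M[R]_(p + m) => X *m X *m qbdCm1 + X *m qbdC0 + qbdC1 - X).

(* Multiplying the QBD equation on the right by A^-1 = (I - C'_0)^-1. *)
Lemma qbd_eqnE X : qbd_eqn X = 0 <-> X = qbdC *m alpha + X *m X *m qbdD *m beta.
Proof.
have C1_inv : qbdC1 *m invmx qbdA = qbdC *m alpha.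
  by rewrite qbdC1_row -{1}[invmx qbdA]vsubmxK mul_row_col mul0mx addr0.
have Cm1_inv : qbdCm1 *m invmx qbdA = qbdD *m beta.
  by rewrite qbdCm1_row -{1}[invmx qbdA]vsubmxK mul_row_col mul0mx add0r.
have eqnE : qbd_eqn X = X *m X *m qbdCm1 + qbdC1 - X *m qbdA.
  by rewrite /qbdA; mx_entrywise; ring.
rewrite eqnE; split=> [/eqP|e].
  rewrite subr_eq0 => /eqP e; rewrite -[LHS](mulmxK qbdA_unit) -e mulmxDl C1_inv.
  by rewrite -!mulmxA Cm1_inv; mx_entrywise; ring.
have XA : X *m qbdA = X *m X *m qbdCm1 + qbdC1.
  rewrite {1}e -C1_inv -mulmxA -Cm1_inv mulmxDl -!mulmxA mulVmx ?qbdA_unit // !mulmx1.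
  by rewrite !mulmxA addrC.
by rewrite XA subrr.
Qed.

Lemma qbd_sol_ge_iter RC : mx_nonneg RC -> qbd_eqn RC = 0 ->
  forall n, mx_le (qbdC *m iter n gamma_step 0) RC.
Proof.
move=> RC_ge0 /qbd_eqnE RC_fix; elim=> [|n IH] /=.
  by rewrite mulmx0; apply/mx_nonneg_ge0.
have iter_ge0 : mx_nonneg (iter n gamma_step 0).
  by elim: (n) => [|k IHk] /=; [apply: mx_nonneg0 | apply: gamma_step_nonneg].
rewrite /gamma_step mulmxDr [X in mx_le _ X]RC_fix; apply: mx_leD => //.
have -> : qbdC *m (iter n gamma_step 0 *m qbdC *m (iter n gamma_step 0 *m qbdD) *m beta) =
  qbdC *m iter n gamma_step 0 *m (qbdC *m iter n gamma_step 0) *m qbdD *m beta.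
  by rewrite !mulmxA.
apply: mx_le_mul2r beta_nonneg _; apply: mx_le_mul2r qbdD_nonneg _.
by apply: mx_le_mul => //; apply: mx_nonnegM qbdC_nonneg iter_ge0.
Qed.

Lemma qbd_min_solE RC : is_min_nonneg_sol qbd_eqn RC -> RC = qbdC *m Gamma.
Proof.
case=> RC_ge0 RC_sol RC_min; apply: mx_le_anti.
  apply: RC_min; first exact: mx_nonnegM qbdC_nonneg Gamma_nonneg.
  apply/qbd_eqnE.
  have -> : qbdC *m Gamma *m (qbdC *m Gamma) *m qbdD *m beta =
            qbdC *m (Gamma *m qbdC) *m (Gamma *m qbdD) *m beta by rewrite !mulmxA.
  by rewrite Gamma_C Gamma_D mulmxDr !mulmxA.
exact: mx_cvg_le (mx_cvgMl gamma_iter_cvg) (qbd_sol_ge_iter RC_ge0 RC_sol).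
Qed.

Lemma qbd_sol_similar :
  qbdA *m (col_mx E H *m row_mx 1%:M (R1 *m Psi)) *m invmx qbdA = qbdC *m Gamma.
Proof.
have col_EH : col_mx E H = invmx qbdA *m qbdC.
  by rewrite EGHF_ul EGHF_dl -mul_col_mx vsubmxK.
rewrite col_EH !mulmxA mulmxV ?qbdA_unit // mul1mx -mulmxA.
by rewrite -{1}[invmx qbdA]vsubmxK mul_row_col mul1mx.
Qed.
End UniformizedQBD.

Unset Implicit Arguments.

Theorem theorem8 (R : realType) (p m : nat) (T : 'M[R]_(p + m))
    (Psi : 'M[R]_(p, m)) (lam mu : R) (RC : 'M[R]_(p + m)) :
  (0 < p)%N -> (0 < m)%N ->
  is_generator T ->
  is_min_nonneg_sol
    (fun X : 'M[R]_(p, m) =>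
       ursubmx T + X *m drsubmx T + ulsubmx T *m X + X *m dlsubmx T *m X) Psi ->
  0 < lam -> 0 < mu ->
  (forall i, `|T i i| <= lam) -> (forall i, `|T i i| <= mu) ->
  let Pl := Pmx lam T in
  let Pm := Pmx mu T in
  let M := EGHF lam mu T in
  let E := ulsubmx M in
  let H := dlsubmx M in
  let R1 := E *m invmx (1%:M - Psi *m H) in
  let Cm1 := 2^-1 *: block_mx 0 (ursubmx Pm) 0 (drsubmx Pm) in
  let C0 := 2^-1 *: block_mx (ulsubmx Pm) (ursubmx Pl)
                             (dlsubmx Pm) (drsubmx Pl) in
  let C1 := 2^-1 *: block_mx (ulsubmx Pl) 0 (dlsubmx Pl) 0 in
  is_min_nonneg_sol
    (fun X : 'M[R]_(p + m) => X *m X *m Cm1 + X *m C0 + C1 - X) RC ->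
  RC = (1%:M - C0) *m block_mx E 0 H 0
         *m block_mx 1%:M (R1 *m Psi) 0 (invmx (1%:M - H *m Psi))
         *m invmx (1%:M - C0)
  /\ spectral_radius RC = spectral_radius R1.
Proof.
move=> _ m_gt0 T_gen Psi_min lam_gt0 mu_gt0 T_lam T_mu Pl Pm M E H R1 Cm1 C0 C1 RC_min.
have RC_sim :
    RC = (1%:M - C0) *m (col_mx E H *m row_mx 1%:M (R1 *m Psi)) *m invmx (1%:M - C0).
  rewrite (qbd_min_solE T_gen lam_gt0 mu_gt0 T_lam T_mu Psi_min RC_min).
  by rewrite -(qbd_sol_similar T_gen lam_gt0 mu_gt0 T_lam T_mu Psi).
split; first by rewrite RC_sim -[in RHS](mulmxA (1%:M - C0)) mulmx_block_col0.
rewrite RC_sim spectral_radius_similar_mulC; last by rewrite -{1}(addn0 p) ltn_add2l.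
  by rewrite mul_row_col mul1mx -(R1_fix T_gen lam_gt0 mu_gt0 T_lam T_mu Psi_min).
exact: (qbdA_unit T_gen lam_gt0 mu_gt0 T_lam T_mu).
Qed.
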